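(* For all sufficiently large $n$ the following holds for $T\sim\mathcal{R}(n,2)$. (1) The probability that there exist $R\subseteq A_1$ with $|R|\ge n/20$, $S\subseteq A_2$ with $|S|\ge n/20$ and a permutation $\pi$ of $V(T)$ such that $L_\pi(T)$ has no edge between $R$ and $S$, is at most $1/n$. (2) For every $D\in\{+,-\}^2$ and every ordered pair $(u,v)$ of two distinct vertices of $T$, $\Pr\left[|C_D((u,v))|\ge 1.1n/4\right]\le 1/n^3$.
   Context: $\mathcal{R}(n,2)$ is the probability space of bipartite tournaments with vertex classes $A_1,A_2$ of size $n$ each, every edge between $A_1$ and $A_2$ oriented independently and uniformly at random. For a permutation (bijection) $\pi:V(T)\to\{1,\ldots,|V(T)|\}$, $L_\pi(T)$ is the spanning subgraph of $T$ consisting of all edges $(u,v)\in E(T)$ with $\pi(u)<\pi(v)$. For $D\in\{+,-\}^d$ and a sequence $A'=(v_1,\ldots,v_d)$ of distinct vertices, $C_D(A')$ is the set of vertices $w$ of $T$ such that for each $j$, $(v_j,w)\in E(T)$ if $D(j)=+$ and $(w,v_j)\in E(T)$ if $D(j)=-$. *)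

From mathcomp Require Import all_boot all_order all_algebra.
Set Implicit Arguments. Unset Strict Implicit. Unset Printing Implicit Defensive.
Import Order.TTheory GRing.Theory Num.Theory.

(* Vertex set of a bipartite tournament with classes A1 = inl 'I_n, A2 = inr 'I_n. *)
Definition vtx (n : nat) : finType := ('I_n + 'I_n)%type.

(* A bipartite tournament in R(n,2): o (i,j) = true iff the edge between
   i in A1 and j in A2 is oriented A1 -> A2, i.e. (inl i, inr j) in E(T). *)
Definition btour (n : nat) : finType := {ffun 'I_n * 'I_n -> bool}.

Definition edge n (T : btour n) (x y : vtx n) : bool :=
  match x, y with
  | inl i, inr j => T (i, j)
  | inr j, inl i => ~~ T (i, j)
  | _, _ => false
  end.

Definition prob n (E : pred (btour n)) : rat :=
  (#|[set T : btour n | E T]|)%:R / (#|btour n|)%:R.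

(* L_pi(T) : edges (x,y) of T with pi x < pi y; pi : V(T) -> {0..|V|-1}
   (a bijection; positions shifted by one with respect to {1..|V|}). *)
Definition Ledge n (T : btour n) (pi : vtx n -> 'I_(n + n)) (x y : vtx n) : bool :=
  edge T x y && (pi x < pi y)%N.

Definition inA1 n (R : {set 'I_n}) (x : vtx n) : bool :=
  if x is inl i then i \in R else false.
Definition inA2 n (S : {set 'I_n}) (x : vtx n) : bool :=
  if x is inr j then j \in S else false.

Definition no_edge_between n (T : btour n) (pi : vtx n -> 'I_(n + n))
  (R S : {set 'I_n}) : bool :=
  [forall x, forall y, Ledge T pi x y ==>
     ~~ ((inA1 R x && inA2 S y) || (inA2 S x && inA1 R y))].

Definition bad_event n (T : btour n) : bool :=
  [exists R : {set 'I_n}, exists S : {set 'I_n},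
   exists pi : {ffun vtx n -> 'I_(n + n)},
     [&& (n <= 20 * #|R|)%N, (n <= 20 * #|S|)%N,
         injectiveb pi & no_edge_between T pi R S]].

(* C_D(A') for D in {+,-}^d (true = +) and A' = (v_0,...,v_{d-1}). *)
Definition CD n (T : btour n) d (D : 'I_d -> bool) (vs : 'I_d -> vtx n)
  : {set vtx n} :=
  [set w | [forall j : 'I_d, if D j then edge T (vs j) w else edge T w (vs j)]].

Definition pair2 n (u v : vtx n) : 'I_2 -> vtx n :=
  fun j => if j == ord0 then u else v.

From Stdlib Require Import Zify.
From mathcomp Require Import all_boot all_order all_algebra zify ring.
Set Implicit Arguments. Unset Strict Implicit. Unset Printing Implicit Defensive.
Import Order.TTheory GRing.Theory Num.Theory.

(* Both bounds are first-moment computations over the 2^(n^2) equally likely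
   orientations.
   (1) If L_pi(T) has no edge between R and S, every edge between i in R and
   j in S points from the later to the earlier of i, j in the order pi, so T is
   prescribed on |R||S| >= n^2/400 edges.  A union bound over the at most
   4^n (2n)^(2n) triples (R, S, pi) bounds the probability by
   4^n (2n)^(2n) 2^(-n^2/400) <= 1/n.
   (2) C_D((u,v)) is empty unless u and v lie in the same class; then it is the
   set of w whose edges to u and to v have prescribed orientations, and these
   edge pairs are disjoint for distinct w, so |C_D| ~ Bin(n, 1/4).  For
   s = n/59 the moment E[binom(|C_D|, s)] = binom(n, s) 4^(-s) is small, while
   |C_D| >= 1.1n/4 forces binom(|C_D|, s) >= n^3 binom(n, s) 4^(-s). *)

Lemma leq_expS_subn m k : m.+1 ^ k * (m - k) <= m ^ k.+1.
Proof.
elim: k => [|k IH]; first by rewrite expn0 expn1 mul1n subn0.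
have step : m.+1 * (m - k.+1) <= m * (m - k) by nia.
apply: (@leq_trans (m.+1 ^ k * (m * (m - k)))).
  by rewrite expnSr -mulnA leq_mul2l step orbT.
by rewrite mulnCA [m ^ k.+2]expnS leq_mul2l IH orbT.
Qed.

Lemma leq_expS_ratio c k m : c.+1 * k <= m -> c * m.+1 ^ k <= c.+1 * m ^ k.
Proof.
case: m => [|m] le_km.
  by have -> : k = 0 by lia.
rewrite -(leq_pmul2r (ltn0Sn m)).
have le_cm : c * m.+1 <= c.+1 * (m.+1 - k) by nia.
apply: (@leq_trans (c.+1 * (m.+2 ^ k * (m.+1 - k)))).
  by rewrite -mulnA mulnCA [c.+1 * _]mulnCA leq_mul2l le_cm orbT.
by rewrite -mulnA leq_mul2l -expnSr leq_expS_subn orbT.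
Qed.

Lemma leq_poly_exp K c k b m : c.+1 * k <= b ->
  K * b ^ k * c ^ b <= c.+1 ^ b -> b <= m -> K * m ^ k * c ^ m <= c.+1 ^ m.
Proof.
move=> le_kb base; elim: m => [|m IH] le_bm.
  by move: base; have -> : b = 0 by lia.
have [le_bm' | lt_mb] := leqP b m; last by have -> : m.+1 = b by lia.
have step : c * m.+1 ^ k <= c.+1 * m ^ k by apply: leq_expS_ratio; lia.
apply: (@leq_trans (c.+1 * (K * m ^ k * c ^ m))); last first.
  by rewrite expnS leq_mul2l IH ?orbT.
have -> : K * m.+1 ^ k * c ^ m.+1 = K * c ^ m * (c * m.+1 ^ k) by rewrite expnS; ring.
have -> : c.+1 * (K * m ^ k * c ^ m) = K * c ^ m * (c.+1 * m ^ k) by ring.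
by rewrite leq_mul2l step orbT.
Qed.

Lemma leq_ffact_geom a b m x s :
  (forall i, i < s -> a * (m - i) <= b * (x - i)) -> a ^ s * m ^_ s <= b ^ s * x ^_ s.
Proof.
elim: s => [|s IH] le_ab; first by rewrite !expn0 !ffactn0.
have ffact_expS y c : c ^ s.+1 * y ^_ s.+1 = (c ^ s * y ^_ s) * (c * (y - s)).
  by rewrite ffactnSr expnSr; ring.
rewrite !ffact_expS leq_mul ?le_ab // IH // => i /leqW; exact: le_ab.
Qed.

Lemma cube_le_geom n : 59 * 700 <= n -> n ^ 3 * 20 ^ (n %/ 59) <= 21 ^ (n %/ 59).
Proof.
move=> n_ge; set s := n %/ 59.
have s_ge : 700 <= s by rewrite /s; lia.
have n_le : n <= 118 * s by rewrite /s; lia.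
apply: (@leq_trans (118 ^ 3 * s ^ 3 * 20 ^ s)).
  by rewrite -expnMn leq_mul2r leq_exp2r // n_le orbT.
have base : 118 ^ 3 * 700 ^ 3 * 20 ^ 700 <= 21 ^ 700 by zify; vm_compute.
exact: leq_poly_exp (isT : 21 * 3 <= 700) base s_ge.
Qed.

Lemma binom_ratio_le n x : 59 * 700 <= n -> 11 * n <= 40 * x ->
  n ^ 3 * 'C(n, n %/ 59) <= 4 ^ (n %/ 59) * 'C(x, n %/ 59).
Proof.
move=> n_ge le_nx; set s := n %/ 59.
(* binom(n, s) / binom(x, s) = n^_s / x^_s <= (80/21)^s = 4^s (20/21)^s. *)
have ffact_ratio : 21 ^ s * n ^_ s <= 80 ^ s * x ^_ s.
  by apply: leq_ffact_geom => i lt_is; rewrite /s in lt_is; lia.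
have ffact_le : n ^ 3 * n ^_ s <= 4 ^ s * x ^_ s.
  rewrite -(@leq_pmul2l (20 ^ s)) ?expn_gt0 //.
  apply: (@leq_trans (21 ^ s * n ^_ s)).
    by rewrite mulnA [20 ^ s * _]mulnC leq_mul2r cube_le_geom ?orbT.
  by rewrite mulnA -expnMn.
have bin_ffactl c y : c * 'C(y, s) * s`! = c * y ^_ s by rewrite -mulnA bin_ffact.
by rewrite -(@leq_pmul2r s`!) ?fact_gt0 // !bin_ffactl.
Qed.

Lemma card_ffun_fixed_on (X Y : finType) (A : {set X}) (g : X -> Y) :
  #|[set f : {ffun X -> Y} | [forall x in A, f x == g x]]| * #|Y| ^ #|A| = #|Y| ^ #|X|.
Proof.
pose F x : pred Y := if x \in A then pred1 (g x) else predT.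
have -> : #|[set f : {ffun X -> Y} | [forall x in A, f x == g x]]| = #|family F|.
  apply: eq_card => f; rewrite inE; apply/forall_inP/familyP => [fA x | fF x xA].
    by rewrite /F; case: ifP => // xA; rewrite inE fA.
  by have := fF x; rewrite /F xA inE.
rewrite card_family foldrE big_map big_enum /= (bigID (mem A)) /=.
rewrite (eq_bigr (fun _ => 1)) => [|x xA]; last by rewrite /F xA card1.
rewrite (eq_bigr (fun _ => #|Y|) (P := fun x => x \notin A)) => [|x /negbTE xA]; last first.
  by rewrite /F xA; apply: eq_card.
rewrite !prod_nat_const exp1n mul1n -expnD -(cardsC A) addnC.
by congr (_ ^ (_ + _)); apply: eq_card => x; rewrite inE.
Qed.

Lemma leq_card_bigcup (I T : finType) (P : pred I) (F : I -> {set T}) :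
  #|\bigcup_(i | P i) F i| <= \sum_(i | P i) #|F i|.
Proof.
elim/big_rec2: _ => [|i m U _ le_Um]; first by rewrite cards0.
by apply: leq_trans (leq_card_setU _ _) _; rewrite leq_add2l.
Qed.

Lemma leq_sum_of_card_mul (I : finType) (P : pred I) (x : I -> nat) M :
  (forall i, P i -> #|I| * x i <= M) -> \sum_(i | P i) x i <= M.
Proof.
move=> le_xM; have [I0 | I_pos] := posnP #|I|.
  by rewrite big1 // => i _; move: I0; rewrite (cardD1 i).
rewrite -(leq_pmul2l I_pos) big_distrr /=.
apply: (@leq_trans (\sum_(i | P i) M)); first exact: leq_sum.
by rewrite sum_nat_const leq_mul2r max_card orbT.
Qed.

Section PairPattern.
Variables (X I : finType) (p1 p2 : I -> X) (a b : bool).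
Hypotheses (p1_inj : injective p1) (p2_inj : injective p2)
  (p12_disj : forall i j, p1 i != p2 j).

Definition pattern_set (f : {ffun X -> bool}) : {set I} :=
  [set i | (f (p1 i) == a) && (f (p2 i) == b)].

Lemma card_pattern_superset (J : {set I}) :
  #|[set f | J \subset pattern_set f]| * 4 ^ #|J| = 2 ^ #|X|.
Proof.
have p2_notin_p1 j : p2 j \notin p1 @: J.
  by apply/imsetP => -[i _ /esym/eqP]; rewrite (negbTE (p12_disj i j)).
pose A := p1 @: J :|: p2 @: J.
pose g x := if x \in p1 @: J then a else b.
have card_A : #|A| = #|J| + #|J|.
  rewrite cardsU !card_imset // (_ : _ :&: _ = set0) ?cards0 ?subn0 //.
  apply/setP => x; rewrite !inE; apply/andP => -[/[swap] /imsetP[j _ ->]].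
  by rewrite (negbTE (p2_notin_p1 j)).
have <- : #|[set f : {ffun X -> bool} | [forall x in A, f x == g x]]| =
          #|[set f | J \subset pattern_set f]|.
  apply: eq_card => f; rewrite !inE; apply/forall_inP/subsetP => [fA j jJ | fJ x].
    have := fA (p1 j); have := fA (p2 j); rewrite !inE !imset_f ?orbT // /g imset_f //.
    by rewrite (negbTE (p2_notin_p1 j)) => /(_ isT) -> /(_ isT) ->.
  rewrite !inE => /orP[] /imsetP[j jJ ->].
    by have := fJ j jJ; rewrite inE /g imset_f // => /andP[/eqP ->].
  by have := fJ j jJ; rewrite inE /g (negbTE (p2_notin_p1 j)) => /andP[_ /eqP ->].
by have := card_ffun_fixed_on A g; rewrite card_bool card_A addnn -mul2n expnM.
Qed.

Lemma sum_binom_pattern s :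
  (\sum_(f : {ffun X -> bool}) 'C(#|pattern_set f|, s)) * 4 ^ s = 'C(#|I|, s) * 2 ^ #|X|.
Proof.
have binom_sum f : 'C(#|pattern_set f|, s) =
    \sum_(J : {set I}) ((J \subset pattern_set f) && (#|J| == s) : nat).
  rewrite -cards_draws -sum1_card big_mkcond /=.
  by apply: eq_bigr => J _; rewrite inE; case: andP.
rewrite (eq_bigr _ (fun f _ => binom_sum f)) exchange_big /= big_distrl /=.
rewrite (eq_bigr (fun J : {set I} => if #|J| == s then 2 ^ #|X| else 0)) => [|J _].
  rewrite -big_mkcond /= sum_nat_const -card_draws.
  by congr (_ * _); apply: eq_card => J; rewrite inE.
case: (#|J| =P s) => [<-|_]; last by rewrite big1 // => f; rewrite andbF.
rewrite -(card_pattern_superset J); congr (_ * _).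
by rewrite -sum1_card [RHS]big_mkcond; apply: eq_bigr => f _; rewrite inE andbT.
Qed.

Lemma card_pattern_event (P : pred nat) m s : s <= #|I| ->
  (forall x, P x -> m * 'C(#|I|, s) <= 4 ^ s * 'C(x, s)) ->
  m * #|[set f | P #|pattern_set f|]| <= 2 ^ #|X|.
Proof.
move=> le_sI moment.
rewrite -(@leq_pmul2r 'C(#|I|, s)) ?bin_gt0 // [X in _ <= X]mulnC -sum_binom_pattern.
rewrite mulnAC -sum1_card big_distrr /= [X in _ <= X]big_distrl /=.
apply: (@leq_trans (\sum_(f in [set f | P #|pattern_set f|]) 'C(#|pattern_set f|, s) * 4 ^ s)).
  by apply: leq_sum => f; rewrite inE muln1 (mulnC _ (4 ^ s)); apply: moment.
by rewrite [X in _ <= X](bigID (mem [set f | P #|pattern_set f|])) leq_addr.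
Qed.

End PairPattern.

Lemma forall_ord2 (P : pred 'I_2) : [forall k, P k] = P ord0 && P ord_max.
Proof.
apply/forallP/andP => [PP | [P0 P1] [[|[|k]] lt_k2] //]; first by split; apply: PP.
  by rewrite (_ : Ordinal lt_k2 = ord0) //; apply/val_inj.
by rewrite (_ : Ordinal lt_k2 = ord_max) //; apply/val_inj.
Qed.

Lemma CD_inl_inl n (T : btour n) D i1 i2 :
  CD T D (pair2 (inl i1) (inl i2)) =
  inr @: pattern_set (fun j => (i1, j)) (fun j => (i2, j)) (D ord0) (D ord_max) T.
Proof.
apply/setP => -[i|j]; rewrite inE forall_ord2 /pair2 /=.
  by case: (D ord0); apply/esym/imsetP => -[].
rewrite mem_imset => [|? ? []//]; rewrite inE.
by case: (D ord0); case: (D ord_max); case: (T (i1, j)); case: (T (i2, j)).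
Qed.

Lemma CD_inr_inr n (T : btour n) D j1 j2 :
  CD T D (pair2 (inr j1) (inr j2)) =
  inl @: pattern_set (fun i => (i, j1)) (fun i => (i, j2)) (~~ D ord0) (~~ D ord_max) T.
Proof.
apply/setP => -[i|j]; rewrite inE forall_ord2 /pair2 /=; last first.
  by case: (D ord0); apply/esym/imsetP => -[].
rewrite mem_imset => [|? ? []//]; rewrite inE.
by case: (D ord0); case: (D ord_max); case: (T (i, j1)); case: (T (i, j2)).
Qed.

Lemma CD_pair_cases n D (u v : vtx n) : u != v ->
  (forall T, CD T D (pair2 u v) = set0) \/
  exists p1 p2 : 'I_n -> 'I_n * 'I_n, exists a b : bool,
    [/\ injective p1, injective p2, forall i j, p1 i != p2 j &
        forall T, #|CD T D (pair2 u v)| = #|pattern_set p1 p2 a b T|].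
Proof.
case: u v => [i1|j1] [i2|j2] uv.
2,3: by left => T; apply/setP => -[i|j]; rewrite !inE forall_ord2 /= !if_same ?andbF.
- right; exists (fun j => (i1, j)), (fun j => (i2, j)), (D ord0), (D ord_max).
  split=> [? ? []|? ? []|j j'|T] //; first by apply: contraNneq uv => -[->].
  by rewrite CD_inl_inl card_imset // => ? ? [].
- right; exists (fun i => (i, j1)), (fun i => (i, j2)), (~~ D ord0), (~~ D ord_max).
  split=> [? ? []|? ? []|i i'|T] //; first by apply: contraNneq uv => -[_ ->].
  by rewrite CD_inr_inr card_imset // => ? ? [].
Qed.

(* pi ranges over all maps V(T) -> 'I_(2n), not only bijections; this only
   enlarges the union bound. *)
Definition witness n : finType :=
  ({set 'I_n} * {set 'I_n} * {ffun vtx n -> 'I_(n + n)})%type.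

(* The orientation of the edge between i in A1 and j in A2 that keeps it out of
   L_pi: from the later to the earlier endpoint. *)
Definition forced_orientation n (pi : vtx n -> 'I_(n + n)) (e : 'I_n * 'I_n) : bool :=
  (pi (inr e.2) < pi (inl e.1))%N.

Definition forced_set n (w : witness n) : {set btour n} :=
  [set T : btour n | [forall e in setX w.1.1 w.1.2, T e == forced_orientation w.2 e]].

Definition large_witness n (w : witness n) : bool :=
  (n <= 20 * #|w.1.1|) && (n <= 20 * #|w.1.2|).

Lemma bad_event_forced n :
  [set T | bad_event T] \subset \bigcup_(w : witness n | large_witness w) forced_set w.
Proof.
apply/subsetP => T; rewrite inE => /existsP[R /existsP[S /existsP[pi]]].
case/and4P=> R_large S_large /injectiveP pi_inj /forallP no_edge.
apply/bigcupP; exists (R, S, pi); first exact/andP.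
rewrite inE; apply/forall_inP => -[i j]; rewrite in_setX /= => /andP[iR jS].
move: (no_edge (inl i)) (no_edge (inr j)) => /forallP/(_ (inr j)) + /forallP/(_ (inl i)).
rewrite /Ledge /= iR jS /= !implybF /forced_orientation /=.
have pi_neq : pi (inr j) != pi (inl i) :> nat by rewrite (inj_eq val_inj) (inj_eq pi_inj).
case: (T (i, j)) => /= [+ _ | _ /negbTE ->//].
by rewrite -leqNgt ltn_neqAle pi_neq => ->.
Qed.

Lemma card_witness n : #|{: witness n}| = 2 ^ n * 2 ^ n * (n + n) ^ (n + n).
Proof.
have card_set (X : finType) : #|{set X}| = 2 ^ #|X|.
  by rewrite -[in RHS]cardsT -card_powerset powersetT cardsT.
by rewrite !card_prod !card_set card_ffun card_sum !card_ord.
Qed.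

Lemma leq_n_witnesses_exp n t : 2 ^ 14 <= n -> n * n <= 400 * t ->
  n * (2 ^ n * 2 ^ n * (n + n) ^ (n + n)) <= 2 ^ t.
Proof.
move=> n_ge le_nt.
have poly : 2 ^ 2000 * n ^ 800 <= 2 ^ n.
  have base : 2 ^ 2000 * (2 ^ 14) ^ 800 * 1 ^ 2 ^ 14 <= 2 ^ 2 ^ 14.
    by rewrite exp1n muln1 -expnM -expnD leq_exp2l.
  by have := leq_poly_exp (isT : 2 * 800 <= 2 ^ 14) base n_ge; rewrite exp1n muln1.
have n_le : n <= 2 ^ n by apply: ltnW; rewrite ltn_expl.
apply: (@leq_trans ((2 ^ 5 * n ^ 2) ^ n)).
  have -> : (2 ^ 5 * n ^ 2) ^ n = 2 ^ n * (2 ^ n * 2 ^ n * (n + n) ^ (n + n)).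
    rewrite addnn -mul2n expnMn !expnM -!expnMn.
    by congr (_ ^ n); ring.
  by rewrite leq_mul2r n_le orbT.
rewrite -(@leq_exp2r _ _ 400) //.
have -> : ((2 ^ 5 * n ^ 2) ^ n) ^ 400 = (2 ^ 2000 * n ^ 800) ^ n.
  by rewrite expnAC expnMn -!expnM.
apply: (@leq_trans ((2 ^ n) ^ n)); first by rewrite leq_exp2r //; lia.
by rewrite -!expnM leq_exp2l //; lia.
Qed.

Lemma card_forced_set n (w : witness n) :
  #|forced_set w| * 2 ^ (#|w.1.1| * #|w.1.2|) = 2 ^ (n * n).
Proof.
have := card_ffun_fixed_on (setX w.1.1 w.1.2) (forced_orientation w.2).
by rewrite cardsX card_bool card_prod !card_ord.
Qed.

Lemma card_bad_event n : 2 ^ 14 <= n -> n * #|[set T : btour n | bad_event T]| <= 2 ^ (n * n).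
Proof.
move=> n_ge.
apply: (@leq_trans (n * \sum_(w : witness n | large_witness w) #|forced_set w|)).
  rewrite leq_mul2l (leq_trans (subset_leq_card (bad_event_forced n))) ?orbT //.
  exact: leq_card_bigcup.
rewrite big_distrr /=; apply: leq_sum_of_card_mul => -[[R S] pi] /andP[/= R_large S_large].
have RS_large : n * n <= 400 * (#|R| * #|S|).
  have -> : 400 * (#|R| * #|S|) = 20 * #|R| * (20 * #|S|) by ring.
  exact: leq_mul.
have := leq_n_witnesses_exp n_ge RS_large; rewrite -card_witness => le_W.
rewrite -(card_forced_set (R, S, pi)) /= mulnA [_ * 2 ^ _]mulnC leq_mul2r.
by rewrite [#|_| * n]mulnC le_W orbT.
Qed.

Lemma card_CD_large n D (u v : vtx n) : 59 * 700 <= n -> u != v ->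
  n ^ 3 * #|[set T : btour n | 11 * n <= 40 * #|CD T D (pair2 u v)|]| <= 2 ^ (n * n).
Proof.
move=> n_ge uv.
case: (CD_pair_cases D uv) => [CD0 | [p1 [p2 [a [b [p1_inj p2_inj p12_disj card_CD]]]]]].
  rewrite eq_card0 ?muln0 // => T.
  by rewrite inE CD0 cards0; apply/negbTE; rewrite -ltnNge; lia.
have -> : [set T : btour n | 11 * n <= 40 * #|CD T D (pair2 u v)|] =
    [set T | 11 * n <= 40 * #|pattern_set p1 p2 a b T|].
  by apply/setP => T; rewrite !inE card_CD.
have card_edges : #|{: 'I_n * 'I_n}| = n * n by rewrite card_prod card_ord.
rewrite -card_edges.
apply: (card_pattern_event a b p1_inj p2_inj p12_disj
  (P := fun x => 11 * n <= 40 * x) (s := n %/ 59)) => [|x].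
  by rewrite card_ord leq_div.
by rewrite card_ord; apply: binom_ratio_le.
Qed.

Lemma prob_le_inv n (E : pred (btour n)) c : 0 < c ->
  c * #|[set T | E T]| <= 2 ^ (n * n) -> (prob E <= 1 / c%:R)%R.
Proof.
move=> c_pos le_cE.
have card_btour : #|btour n| = 2 ^ (n * n) by rewrite card_ffun card_bool card_prod card_ord.
rewrite /prob card_btour ler_pdivrMr ?ltr0n ?expn_gt0 // mul1r mulrC ler_pdivlMr ?ltr0n //.
by rewrite -natrM ler_nat mulnC.
Qed.

Local Open Scope ring_scope.

Theorem lemma3p4 :
  exists N : nat, forall n : nat, (N <= n)%N ->
    prob (@bad_event n) <= 1 / n%:R
    /\ forall (D : 'I_2 -> bool) (u v : vtx n), u != v ->
         prob (fun T : btour n =>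
                 (11 * n <= 40 * #|CD T D (pair2 u v)|)%N)
         <= 1 / (n ^ 3)%:R.
Proof.
exists (59 * 700)%N => n n_ge.
have n_pos : (0 < n)%N by apply: leq_trans n_ge.
split; first by apply: prob_le_inv n_pos _; apply: card_bad_event; apply: leq_trans n_ge.
move=> D u v uv; apply: prob_le_inv; first by rewrite expn_gt0 n_pos.
exact: card_CD_large.
Qed.
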